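(* Let $n\ge2$, let $w = l_1\cdots l_k$ be a word in $\mathbb{F}_n^+$ of length $k\ge2$, let $0\le\delta<1$, and let $z_1,\dots,z_{k+1}\in\delta{\mathbb{B}}_n$, $z_i = (z_{i1},\dots,z_{in})$. Let $\rho_{Z,w}$ be the completely contractive representation of ${\mathfrak{A}}_n\times_\phi{\mathbb{Z}}^+$ into $(k+1)\times(k+1)$ matrices determined by $\rho_{Z,w}(U)=0$ and \[ \rho_{Z,w}(S_j) = \operatorname{diag}(z_{ij})_{i=1}^{k+1} + (1-\delta)\sum_{i:\, l_i = j} E_{i,i+1},\qquad 1\le j\le n. \] Then $\rho_{Z,w}(S_w)_{1,k+1} = (1-\delta)^k$ and $\rho_{Z,w}(S_v)_{1,k+1} = 0$ for all other words $v$ with $|v|\le k$. For each word $v$ with $|v|>k$ there is an analytic function $F_v$ on $(\delta{\mathbb{B}}_n)^{k+1}$ with $F_v(0)=0$ such that $\rho_{Z,w}(S_v)_{1,k+1} = F_v(z_1,\dots,z_{k+1})$ for all such choices of $z_1,\dots,z_{k+1}$. Moreover, if the coordinates $\{z_{ij}: 1\le i\le k+1,\ 1\le j\le n\}$ are all distinct, then the range of $\rho_{Z,w}$ is all of ${\mathfrak{T}}_{k+1}$, so that $\rho_{Z,w}\in{\mathcal{N}}_{Z,k+1}$.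
   Context: ${\mathfrak{A}}_n$ is the non-commutative disc algebra generated by the left creation operators $S_1,\dots,S_n$ on full Fock space; for a word $v = j_1\cdots j_m\in\mathbb{F}_n^+$ (free semigroup on $n$ letters) $S_v = S_{j_1}\cdots S_{j_m}$. $\phi$ is an isometric automorphism of ${\mathfrak{A}}_n$ and ${\mathfrak{A}}_n\times_\phi{\mathbb{Z}}^+$ is the universal operator algebra generated by ${\mathfrak{A}}_n$ and a contraction $U$ with $AU=U\phi(A)$; since the row $[\rho_{Z,w}(S_1)\ \cdots\ \rho_{Z,w}(S_n)]$ has norm $<1$, the formulas determine a completely contractive representation. $E_{i,i+1}$ are matrix units and ${\mathfrak{T}}_{k+1}$ is the algebra of upper triangular $(k+1)\times(k+1)$ matrices. For $z\in{\mathbb{B}}_n$, $\theta_{z,0}$ is the character of ${\mathfrak{A}}_n\times_\phi{\mathbb{Z}}^+$ with $\theta_{z,0}(S_i) = z_i$ and $\theta_{z,0}(U)=0$. A nest representation of size $m$ is a representation onto ${\mathfrak{T}}_m$, with diagonal characters $\theta_{\pi,i}(A)=\langle\pi(A)\xi_i,\xi_i\rangle$; for $Z=(z_1,z_2,\dots)$, ${\mathcal{N}}_{Z,m}$ is the set of $m\times m$ nest representations $\pi$ with $\theta_{\pi,i}=\theta_{z_i,0}$, $1\le i\le m$. *)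

From HB Require Import structures.
From mathcomp Require Import all_boot all_order all_algebra.
From mathcomp Require Import mpoly.
Set Implicit Arguments. Unset Strict Implicit. Unset Printing Implicit Defensive.
Import Order.TTheory GRing.Theory Num.Theory.
Local Open Scope ring_scope.

(* Words in F_n^+ : sequences of letters in 'I_n (letter j+1 of the paper is j).
   Points z_1..z_{k+1} : rows of a matrix Z : 'M_(k.+1, n), Z i j = z_{i+1, j+1}.
   Matrix indices 1..k+1 of the paper are 0..k here. *)

Definition rhoS (C : numClosedFieldType) (n k : nat) (Z : 'M[C]_(k.+1, n))
  (delta : C) (w : seq 'I_n) (j : 'I_n) : 'M[C]_k.+1 :=
  \matrix_(a, b)
    ((if a == b then Z a j else 0) +
     (if (nat_of_ord b == (nat_of_ord a).+1) && (nth j w a == j)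
      then 1 - delta else 0)).

Definition rhoSw (C : numClosedFieldType) (n k : nat) (Z : 'M[C]_(k.+1, n))
  (delta : C) (w : seq 'I_n) (v : seq 'I_n) : 'M[C]_k.+1 :=
  \prod_(j <- v) rhoS Z delta w j.

Definition in_dball (C : numClosedFieldType) (n : nat) (delta : C)
  (z : 'rV[C]_n) : Prop :=
  \sum_(j < n) `|z 0 j| ^+ 2 < delta ^+ 2.

Definition upper_tri (C : numClosedFieldType) (m : nat) (M : 'M[C]_m) : Prop :=
  forall a b : 'I_m, (b < a)%N -> M a b = 0.

(* the range of rho_{Z,w}: since rho(U) = 0 and the target is finite
   dimensional, it is the linear span of the rho(S_v), v a word *)
Definition in_range_rho (C : numClosedFieldType) (n k : nat)
  (Z : 'M[C]_(k.+1, n)) (delta : C) (w : seq 'I_n) (M : 'M[C]_k.+1) : Prop :=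
  exists (s : seq (seq 'I_n)) (c : seq C),
    M = \sum_(i < size s) c`_i *: rhoSw Z delta w (nth [::] s i).

Definition zpow (C : numClosedFieldType) (n : nat) (z : 'rV[C]_n)
  (v : seq 'I_n) : C := \prod_(j <- v) z 0 j.

From HB Require Import structures.
From mathcomp Require Import all_boot all_order all_algebra.
From mathcomp Require Import mpoly.
Import Order.TTheory GRing.Theory Num.Theory.
Local Open Scope ring_scope.
Set Implicit Arguments. Unset Strict Implicit.

(* Each rho(S_j) is upper bidiagonal, with diagonal (z_ij)_i and superdiagonal
   ((1 - delta) [l_i = j])_i.  A product of m upper bidiagonal matrices lives on
   the band 0 <= col - row <= m; its entries at distance exactly m are the
   products of superdiagonal entries along the unique path, and its diagonal
   is the product of the diagonals.  So the corner entry of rho(S_v) vanishes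
   for |v| < k and is (1 - delta)^k [v = w] for |v| = k.  For |v| > k it is a
   polynomial in the z_ij, vanishing at 0 where every rho(S_j) is strictly upper
   triangular.
   The rho(S_v) span a unital algebra of upper triangular matrices.  If j is not
   l_a, row a of rho(S_j) is z_aj e_a, so the triangular Cayley-Hamilton product
   of the rho(S_j) - z_cj over c > a kills the rows below a, and its row a is a
   multiple of e_a, nonzero as the z_ij are distinct; symmetrically for columns
   with a letter other than l_(a-1).  The product of the two is a multiple of
   E_aa; then E_(a,a+1) is a multiple of E_aa rho(S_(l_a)) E_(a+1,a+1), and these
   generate all of T_(k+1) (n >= 2 provides the auxiliary letters). *)

Section Banded.
Variables (R : pzRingType) (m : nat).
Implicit Types A B : 'M[R]_m.+1.

Definition banded (lo hi : nat) A :=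
  forall i j : 'I_m.+1, (j < i + lo)%N || (i + hi < j)%N -> A i j = 0.

Lemma mulmx_entry A B i j : (A * B) i j = \sum_u A i u * B u j.
Proof. by rewrite -mulmxE mxE. Qed.

Lemma banded1 : banded 0 0 1.
Proof.
move=> i j; rewrite !addn0 mxE -val_eqE => /orP[] lt_ij.
  by rewrite gtn_eqF.
by rewrite ltn_eqF.
Qed.

Lemma bandedM lo1 hi1 lo2 hi2 A B : banded lo1 hi1 A -> banded lo2 hi2 B ->
  banded (lo1 + lo2) (hi1 + hi2) (A * B).
Proof.
move=> bA bB i j out_ij; rewrite mulmx_entry big1 // => u _.
have [lt_u|le_u] := ltnP u (i + lo1); first by rewrite bA ?lt_u ?mul0r.
have [lt_hi|le_hi] := leqP u (i + hi1); last by rewrite bA ?le_hi ?orbT ?mul0r.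
rewrite bB ?mulr0 //; case/orP: out_ij => [lt_j|gt_j]; apply/orP; [left|right].
  by apply: leq_trans lt_j _; rewrite addnA leq_add2r.
by apply: leq_ltn_trans gt_j; rewrite addnA leq_add2r.
Qed.

Lemma banded_prod (I : Type) (F : I -> 'M[R]_m.+1) lo hi (r : seq I) :
  (forall x, banded lo hi (F x)) ->
  banded (lo * size r) (hi * size r) (\prod_(x <- r) F x).
Proof.
move=> bF; elim: r => [|x r IH]; first by rewrite big_nil !muln0; exact: banded1.
by rewrite big_cons /= !mulnS; apply: bandedM.
Qed.

Lemma banded_mul_diag hA hB A B i : banded 0 hA A -> banded 0 hB B ->
  (A * B) i i = A i i * B i i.
Proof.
move=> bA bB; rewrite mulmx_entry (bigD1 i) //= big1 ?addr0 // => u ne_ui.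
case: (ltngtP u i) => [lt_ui|lt_iu|/val_inj eq_ui].
- by rewrite bA ?addn0 ?lt_ui ?mul0r.
- by rewrite bB ?addn0 ?lt_iu ?mulr0.
- by rewrite eq_ui eqxx in ne_ui.
Qed.

Lemma banded_prod_diag (I : Type) (F : I -> 'M[R]_m.+1) h (r : seq I) i :
  (forall x, banded 0 h (F x)) -> (\prod_(x <- r) F x) i i = \prod_(x <- r) F x i i.
Proof.
move=> bF; elim: r => [|x r IH]; first by rewrite !big_nil mxE eqxx.
by rewrite !big_cons (banded_mul_diag _ (bF x) (banded_prod (r := r) bF)) IH.
Qed.

Fixpoint superdiag_prod (I : Type) (F : I -> 'M[R]_m.+1) (t : nat) (r : seq I) : R :=
  if r is x :: r' then F x (inord t) (inord t.+1) * superdiag_prod F t.+1 r' else 1.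

Lemma bidiagonal_prod_corner (I : Type) (F : I -> 'M[R]_m.+1) (r : seq I) (t s : 'I_m.+1) :
  (forall x, banded 0 1 (F x)) -> s = (t + size r)%N :> nat ->
  (\prod_(x <- r) F x) t s = superdiag_prod F t r.
Proof.
move=> bF; elim: r t => [|x r IH] t /= def_s.
  by rewrite big_nil mxE (_ : s = t) ?eqxx //; apply: val_inj; rewrite /= def_s addn0.
have lt_t1 : (t.+1 < m.+1)%N.
  by apply: leq_ltn_trans (ltn_ord s); rewrite def_s addnS ltnS leq_addr.
rewrite big_cons mulmx_entry (bigD1 (Ordinal lt_t1)) //= [X in _ + X]big1 ?addr0.
  rewrite IH ?def_s /= ?addnS // inord_val (_ : inord t.+1 = Ordinal lt_t1) //.
  exact/val_inj/inordK.
move=> u ne_u.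
have ne_ut1 : (u : nat) != t.+1 by apply: contra ne_u => /eqP eq_u; apply/eqP/val_inj.
case: (ltngtP u t) => [lt_ut|gt_ut|eq_ut].
- by rewrite bF ?mul0r // addn0 lt_ut.
- by rewrite bF ?mul0r //; apply/orP; right; rewrite addn1 ltn_neqAle eq_sym ne_ut1.
- by rewrite (banded_prod (r := r) bF) ?mulr0 // eq_ut def_s /= addnS mul1n ltnSn orbT.
Qed.

(* The triangular form of Cayley-Hamilton: the factor of index c kills the c-th
   step of the flag, so the product vanishes on the block of rows >= m0 and
   columns < m1. *)
Lemma upper_prod_zero_diag (Y : nat -> 'M[R]_m.+1) h (m0 m1 : nat) (t s : 'I_m.+1) :
  (forall c, banded 0 h (Y c)) -> (forall c (i : 'I_m.+1), i = c :> nat -> Y c i i = 0) ->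
  (m0 <= t)%N -> (s < m1)%N -> (\prod_(m0 <= c < m1) Y c) t s = 0.
Proof.
move=> bY Y0 le_t; elim: m1 s => // m1 IH s lt_s.
have [le_m01|lt_m10] := leqP m0 m1; last first.
  rewrite big_geq // mxE -val_eqE gtn_eqF //.
  by apply: leq_trans lt_s (leq_trans lt_m10 le_t).
rewrite big_nat_recr //= mulmx_entry big1 // => u _.
have bP := banded_prod (r := index_iota m0 m1) bY.
have [lt_ut|le_tu] := ltnP u t; first by rewrite bP ?addn0 ?lt_ut ?mul0r.
have [lt_u|le_u] := ltnP u m1; first by rewrite IH ?mul0r.
case: (ltngtP s u) => [lt_su|lt_us|/val_inj eq_su].
- by rewrite bY ?mulr0 // addn0 lt_su.
- by move: lt_s; rewrite ltnS leqNgt (leq_ltn_trans le_u lt_us).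
- by rewrite eq_su Y0 ?mulr0 //; apply/eqP; rewrite eqn_leq le_u -ltnS -eq_su lt_s.
Qed.

Lemma prod_row_diag (I : Type) (A : I -> 'M[R]_m.+1) (r : seq I) (a s : 'I_m.+1) :
  (forall x s', s' != a -> A x a s' = 0) ->
  (\prod_(x <- r) A x) a s = (\prod_(x <- r) A x a a) *+ (s == a).
Proof.
move=> rowA; elim: r s => [|x r IH] s; first by rewrite !big_nil mxE eq_sym.
rewrite !big_cons mulmx_entry (bigD1 a) //= [X in _ + X]big1 ?addr0 => [|u ne_ua].
  by rewrite IH mulrnAr.
by rewrite rowA ?mul0r.
Qed.

Lemma prod_col_diag (I : Type) (A : I -> 'M[R]_m.+1) (r : seq I) (a t : 'I_m.+1) :
  (forall x t', t' != a -> A x t' a = 0) ->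
  (\prod_(x <- r) A x) t a = (\prod_(x <- r) A x a a) *+ (t == a).
Proof.
move=> colA; elim: r t => [|x r IH] t; first by rewrite !big_nil mxE.
rewrite !big_cons mulmx_entry (bigD1 a) //= [X in _ + X]big1 ?addr0 => [|u ne_ua].
  rewrite IH eqxx mulr1n; case: (eqVneq t a) => [->|ne_ta]; first by rewrite mulr1n.
  by rewrite colA // mul0r mulr0n.
by rewrite IH (negbTE ne_ua) mulr0n mulr0.
Qed.

Lemma delta_mx_sandwich A (a b : 'I_m.+1) :
  delta_mx a a * A * delta_mx b b = A a b *: delta_mx a b.
Proof.
apply/matrixP => t s; rewrite !mulmx_entry (bigD1 b) //= [X in _ + X]big1 ?addr0 => [|u ne_ub].
  rewrite mulmx_entry (bigD1 a) //= [X in _ + X]big1 ?addr0 => [|u ne_ua].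
    by rewrite !mxE !eqxx; case: (t == a); case: (s == b); rewrite ?mulr1 ?mul1r ?mulr0 ?mul0r.
  by rewrite mxE (negbTE ne_ua) andbF mul0r.
by rewrite [delta_mx b b u s]mxE (negbTE ne_ub) mulr0.
Qed.

Lemma subr_scalar_mx_diag A c i : (A - c%:M) i i = A i i - c.
Proof. by rewrite !mxE eqxx mulr1n. Qed.

Lemma subr_scalar_mx_offdiag A c (i j : 'I_m.+1) : i != j -> (A - c%:M) i j = A i j.
Proof. by move=> ne_ij; rewrite !mxE (negbTE ne_ij) mulr0n subr0. Qed.

Lemma banded_subr_scalar h A c : banded 0 h A -> banded 0 h (A - c%:M).
Proof.
move=> bA i j out_ij; rewrite subr_scalar_mx_offdiag ?bA // -val_eqE.
case/orP: out_ij => [|lt_j]; first by rewrite addn0 eq_sym => /ltn_eqF->.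
by rewrite ltn_eqF // (leq_ltn_trans (leq_addr h i) lt_j).
Qed.

Lemma mul_col_row_delta (L U : 'M[R]_m.+1) (a : 'I_m.+1) (cL cU : R) :
  (forall t u : 'I_m.+1, (u < a)%N -> L t u = 0) -> (forall t, L t a = cL *+ (t == a)) ->
  (forall u s : 'I_m.+1, (a < u)%N -> U u s = 0) -> (forall s, U a s = cU *+ (s == a)) ->
  L * U = (cL * cU) *: delta_mx a a.
Proof.
move=> L0 La U0 Ua; apply/matrixP => t s.
rewrite mulmx_entry (bigD1 a) //= big1 ?addr0 => [|u ne_ua].
  rewrite La Ua !mxE mulrnAr mulr1.
  by case: (t == a); case: (s == a); rewrite /= ?mulr0n ?mulr1n ?mulr0 ?mul0r.
case: (ltngtP u a) => [/L0->|/U0->|/val_inj eq_ua]; rewrite ?mul0r ?mulr0 //.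
by rewrite eq_ua eqxx in ne_ua.
Qed.

End Banded.

Section WordSpan.
Variables (R : comNzRingType) (m : nat) (I : Type) (f : seq I -> 'M[R]_m.+1).
Hypotheses (f_nil : f [::] = 1) (f_cat : forall u v, f (u ++ v) = f u * f v).

Definition in_word_span M := exists ps : seq (R * seq I), M = \sum_(p <- ps) p.1 *: f p.2.

Lemma in_word_spanE M :
  in_word_span M <->
  exists (s : seq (seq I)) (c : seq R), M = \sum_(i < size s) c`_i *: f (nth [::] s i).
Proof.
split=> [[ps ->]|[s [c ->]]].
  exists (map snd ps), (map fst ps); rewrite (big_nth (0, [::])) big_mkord size_map.
  by apply: eq_bigr => i _; rewrite !(nth_map (0, [::])).
exists [seq (c`_i, nth [::] s i) | i <- iota 0 (size s)].
by rewrite big_map -(big_mkord xpredT (fun i => c`_i *: f (nth [::] s i))) /index_iota subn0.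
Qed.

Lemma word_span_word v : in_word_span (f v).
Proof. by exists [:: (1, v)]; rewrite big_seq1 scale1r. Qed.

Lemma word_span1 : in_word_span 1.
Proof. by rewrite -f_nil; apply: word_span_word. Qed.

Lemma word_span0 : in_word_span 0.
Proof. by exists [::]; rewrite big_nil. Qed.

Lemma word_spanD M N : in_word_span M -> in_word_span N -> in_word_span (M + N).
Proof. by move=> [ps ->] [qs ->]; exists (ps ++ qs); rewrite big_cat. Qed.

Lemma word_spanZ a M : in_word_span M -> in_word_span (a *: M).
Proof.
move=> [ps ->]; exists [seq (a * p.1, p.2) | p <- ps].
by rewrite big_map scaler_sumr; apply: eq_bigr => p _; rewrite scalerA.
Qed.

Lemma word_spanM M N : in_word_span M -> in_word_span N -> in_word_span (M * N).
Proof.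
move=> [ps ->] [qs ->]; exists [seq (p.1 * q.1, p.2 ++ q.2) | p <- ps, q <- qs].
rewrite big_allpairs_dep mulr_suml; apply: eq_bigr => p _.
rewrite mulr_sumr; apply: eq_bigr => q _ /=.
by rewrite f_cat -scalerAl -scalerAr scalerA.
Qed.

Lemma word_span_sum (J : Type) (r : seq J) (P : pred J) (F : J -> 'M[R]_m.+1) :
  (forall j, in_word_span (F j)) -> in_word_span (\sum_(j <- r | P j) F j).
Proof. by move=> spanF; apply: big_ind => //; [exact: word_span0 | exact: word_spanD]. Qed.

Lemma word_span_prod (J : Type) (r : seq J) (P : pred J) (F : J -> 'M[R]_m.+1) :
  (forall j, in_word_span (F j)) -> in_word_span (\prod_(j <- r | P j) F j).
Proof. by move=> spanF; apply: big_ind => //; [exact: word_span1 | exact: word_spanM]. Qed.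

End WordSpan.

Section RhoEntries.
Variables (C : numClosedFieldType) (n k : nat) (Z : 'M[C]_(k.+1, n)) (delta : C) (w : seq 'I_n).
Local Notation X := (rhoS Z delta w).
Local Notation Xw := (rhoSw Z delta w).

Lemma rhoSw_nil : Xw [::] = 1.
Proof. exact: big_nil. Qed.

Lemma rhoSw_cat u v : Xw (u ++ v) = Xw u * Xw v.
Proof. exact: big_cat. Qed.

Lemma rhoS_diag j i : X j i i = Z i j.
Proof. by rewrite mxE eqxx ltn_eqF ?addr0. Qed.

Lemma rhoS_offdiag j (a b : 'I_k.+1) : a != b ->
  X j a b = (if (b == a.+1 :> nat) && (nth j w a == j) then 1 - delta else 0).
Proof. by move=> ne_ab; rewrite mxE (negbTE ne_ab) add0r. Qed.

Lemma rhoS_bidiagonal j : banded 0 1 (X j).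
Proof.
move=> a b; rewrite addn0 addn1 => out_ab.
have ne_ab : a != b by apply: contraTneq out_ab => ->; rewrite ltnn ltnNge leqnSn.
rewrite rhoS_offdiag // ifF //; apply/andP => -[/eqP eq_b _]; move: out_ab.
by rewrite eq_b ltnn orbF ltnNge leqnSn.
Qed.

Lemma rhoSw_banded v : banded 0 (size v) (Xw v).
Proof. by have := banded_prod (r := v) rhoS_bidiagonal; rewrite mul0n mul1n. Qed.

Lemma rhoSw_diag v i : Xw v i i = zpow (row i Z) v.
Proof.
rewrite /rhoSw (banded_prod_diag _ _ rhoS_bidiagonal).
by apply: eq_bigr => j _; rewrite rhoS_diag mxE.
Qed.

Lemma rhoS_superdiag j t : (t < k)%N ->
  X j (inord t) (inord t.+1) = (if nth j w t == j then 1 - delta else 0).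
Proof.
move=> lt_tk; have lt_t1 : (t.+1 < k.+1)%N by [].
have lt_t : (t < k.+1)%N by apply: ltnW.
rewrite rhoS_offdiag; last by rewrite -val_eqE /= !inordK ?ltn_eqF.
by rewrite /= !inordK ?eqxx.
Qed.

Lemma word_span_rhoSw_upper M : in_word_span Xw M -> upper_tri M.
Proof.
move=> [ps ->] a b lt_ba; rewrite summxE big1 // => p _.
by rewrite mxE rhoSw_banded ?mulr0 // addn0 lt_ba.
Qed.

Hypothesis size_w : size w = k.

Lemma rhoS_row_diag j0 j (a s : 'I_k.+1) : nth j0 w a != j -> s != a -> X j a s = 0.
Proof.
move=> ne_j ne_sa; rewrite rhoS_offdiag 1?(eq_sym a) // ifF //.
apply/andP => -[/eqP eq_s /eqP eq_j]; move: ne_j.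
by rewrite (set_nth_default j) ?eq_j ?eqxx // size_w -ltnS -eq_s.
Qed.

Lemma rhoS_col_diag j0 j (a t : 'I_k.+1) : nth j0 w a.-1 != j -> t != a -> X j t a = 0.
Proof.
move=> ne_j ne_ta; rewrite rhoS_offdiag // ifF //.
apply/andP => -[/eqP eq_a /eqP eq_j]; move: ne_j.
by rewrite eq_a /= (set_nth_default j) ?eq_j ?eqxx // size_w -ltnS -eq_a.
Qed.

Lemma superdiag_prod_rhoS v t : (t + size v <= k)%N ->
  superdiag_prod X t v = (if v == take (size v) (drop t w) then (1 - delta) ^+ size v else 0).
Proof.
elim: v t => [|j v IH] t le_k /=; first by rewrite take0 eqxx expr0.
have lt_tk : (t < k)%N by apply: leq_trans le_k; rewrite addnS ltnS leq_addr.
rewrite (drop_nth j) ?size_w //= eqseq_cons rhoS_superdiag // IH; last by rewrite addSnnS.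
rewrite [nth j w t == j]eq_sym.
by case: (j == nth j w t); case: (v == _); rewrite /= ?mul0r ?mulr0 ?exprS.
Qed.

Lemma rhoSw_corner_self : Xw w ord0 ord_max = (1 - delta) ^+ k.
Proof.
rewrite /rhoSw (bidiagonal_prod_corner rhoS_bidiagonal) /= ?size_w //.
by rewrite superdiag_prod_rhoS ?size_w //= drop0 -size_w take_size eqxx.
Qed.

Lemma rhoSw_corner_short v : (size v <= k)%N -> v != w -> Xw v ord0 ord_max = 0.
Proof.
rewrite leq_eqVlt => /orP[/eqP size_v ne_vw | lt_vk _]; last first.
  by rewrite rhoSw_banded // add0n lt_vk orbT.
rewrite /rhoSw (bidiagonal_prod_corner rhoS_bidiagonal) /= ?size_v //.
by rewrite superdiag_prod_rhoS ?size_v //= drop0 -size_w take_size (negbTE ne_vw).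
Qed.

End RhoEntries.

Section CornerPolynomial.
Variables (C : numClosedFieldType) (n k : nat) (delta : C) (w : seq 'I_n).
Local Notation P := {mpoly C[k.+1 * n]}.
Local Notation Z0 := (0 : 'M[C]_(k.+1, n)).

Lemma rhoS0_strictly_bidiagonal j : banded 1 1 (rhoS Z0 delta w j).
Proof.
move=> a b out_ab; rewrite !mxE if_same add0r ifF //.
by apply/andP => -[/eqP eq_b _]; move: out_ab; rewrite eq_b addn1 ltnn.
Qed.

Lemma rhoSw0_corner_long v : (k < size v)%N -> rhoSw Z0 delta w v ord0 ord_max = 0.
Proof.
move=> lt_kv; have := banded_prod (r := v) (rhoS0_strictly_bidiagonal).
by rewrite mul1n; apply; rewrite add0n lt_kv.
Qed.

Definition rhoS_poly (j : 'I_n) : 'M[P]_k.+1 :=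
  \matrix_(a, b)
    ((if a == b then 'X_(mxvec_index a j) else 0) +
     (if (nat_of_ord b == (nat_of_ord a).+1) && (nth j w a == j)
      then 1 - delta%:MP else 0)).

Definition corner_poly (v : seq 'I_n) : P := (\prod_(j <- v) rhoS_poly j) ord0 ord_max.

Lemma map_rhoS_poly (Z : 'M[C]_(k.+1, n)) j :
  map_mx (meval (mxvec Z 0)) (rhoS_poly j) = rhoS Z delta w j.
Proof.
apply/matrixP => a b; rewrite !mxE mevalD.
congr (_ + _); first by case: (a == b); rewrite ?meval0 // mevalXU mxvecE.
by case: (_ && _); rewrite ?meval0 // mevalB meval1 mevalC.
Qed.

Lemma corner_polyE (Z : 'M[C]_(k.+1, n)) v :
  (corner_poly v).@[mxvec Z 0] = rhoSw Z delta w v ord0 ord_max.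
Proof.
have map_prod : map_mx (meval (mxvec Z 0)) (\prod_(j <- v) rhoS_poly j) = rhoSw Z delta w v.
  by rewrite rmorph_prod; apply: eq_bigr => j _; apply: map_rhoS_poly.
by rewrite -map_prod mxE.
Qed.

Lemma corner_poly0 v : (k < size v)%N -> (corner_poly v).@[fun _ => 0] = 0.
Proof.
move=> lt_kv; rewrite (meval_eq _ (v2 := mxvec Z0 0)) => [|t]; last by rewrite linear0 mxE.
by rewrite corner_polyE rhoSw0_corner_long.
Qed.

End CornerPolynomial.

Section Range.
Variables (C : numClosedFieldType) (n k : nat) (Z : 'M[C]_(k.+1, n)) (delta : C) (w : seq 'I_n).
Hypotheses (n_ge2 : (2 <= n)%N) (size_w : size w = k) (delta_neq1 : delta != 1).
Hypothesis Z_inj : injective (fun ij : 'I_k.+1 * 'I_n => Z ij.1 ij.2).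
Local Notation X := (rhoS Z delta w).
Local Notation span := (in_word_span (rhoSw Z delta w)).

Let j0 : 'I_n := Ordinal (ltnW n_ge2).
Let other_letter (j : 'I_n) : 'I_n := if j == j0 then Ordinal n_ge2 else j0.

Let other_letter_neq j : other_letter j != j.
Proof.
by rewrite /other_letter; case: (eqVneq j j0) => [->|ne_j]; rewrite 1?eq_sym // -val_eqE.
Qed.

Lemma Z_col_neq j (a c : 'I_k.+1) : a != c -> Z a j != Z c j.
Proof.
move=> ne_ac; apply: contra ne_ac => /eqP eq_Z.
by case: (@Z_inj (a, j) (c, j) eq_Z) => ->.
Qed.

Let span_mul := word_spanM (rhoSw_cat Z delta w).
Let span_prod := word_span_prod (rhoSw_nil Z delta w) (rhoSw_cat Z delta w).

Lemma span_rhoS j : span (X j).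
Proof. by have := word_span_word (rhoSw Z delta w) [:: j]; rewrite /rhoSw big_seq1. Qed.

Lemma span_rhoS_shift j c : span (X j - c%:M).
Proof.
have -> : X j - c%:M = X j + (- c) *: rhoSw Z delta w [::].
  by rewrite rhoSw_nil scaleNr scalemx1.
by apply: word_spanD; [exact: span_rhoS | apply/word_spanZ/word_span_word].
Qed.

Lemma span_diag_unit (a : 'I_k.+1) : span (delta_mx a a).
Proof.
pose Y j c := X j - (Z (inord c) j)%:M.
have Y_diag j c (i : 'I_k.+1) : Y j c i i = Z i j - Z (inord c) j.
  by rewrite subr_scalar_mx_diag rhoS_diag.
have bY j c : banded 0 1 (Y j c) by apply/banded_subr_scalar/rhoS_bidiagonal.
have Y0 j c (i : 'I_k.+1) : i = c :> nat -> Y j c i i = 0.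
  by move=> eq_i; rewrite Y_diag -eq_i inord_val subrr.
pose jU := other_letter (nth j0 w a); pose jL := other_letter (nth j0 w a.-1).
pose U := \prod_(a.+1 <= c < k.+1) Y jU c; pose L := \prod_(0 <= c < a) Y jL c.
pose cU := \prod_(a.+1 <= c < k.+1) Y jU c a a; pose cL := \prod_(0 <= c < a) Y jL c a a.
have LU : L * U = (cL * cU) *: delta_mx a a.
  apply: mul_col_row_delta => [t u lt_ua|t|u s lt_au|s].
  - exact: (upper_prod_zero_diag (bY jL) (Y0 jL)).
  - apply: prod_col_diag => c t' ne_t'a.
    rewrite subr_scalar_mx_offdiag // (rhoS_col_diag _ _ size_w (j0 := j0)) //.
    by rewrite eq_sym; apply: other_letter_neq.
  - exact: (upper_prod_zero_diag (bY jU) (Y0 jU)).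
  - apply: prod_row_diag => c s' ne_s'a.
    rewrite subr_scalar_mx_offdiag 1?eq_sym // (rhoS_row_diag _ _ size_w (j0 := j0)) //.
    by rewrite eq_sym; apply: other_letter_neq.
have Y_aa_neq0 j c : (c < k.+1)%N -> c != a -> Y j c a a != 0.
  move=> lt_c ne_ca; rewrite Y_diag subr_eq0 Z_col_neq //.
  by rewrite -val_eqE /= inordK // eq_sym.
have cLU_neq0 : cL * cU != 0.
  rewrite mulf_neq0 // prodf_seq_neq0; apply/allP => c;
    rewrite mem_index_iota => /andP[lo hi].
    by apply: Y_aa_neq0; rewrite ?ltn_eqF // (ltn_trans hi).
  by apply: Y_aa_neq0; rewrite ?gtn_eqF.
have -> : delta_mx a a = (cL * cU)^-1 *: (L * U) by rewrite LU scalerA mulVf ?scale1r.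
by apply/word_spanZ/span_mul; apply: span_prod => c; exact: span_rhoS_shift.
Qed.

Lemma span_superdiag_unit (c b : 'I_k.+1) : b = c.+1 :> nat -> span (delta_mx c b).
Proof.
move=> def_b; have lt_ck : (c < size w)%N by rewrite size_w -ltnS -def_b.
set j := nth j0 w c.
have X_cb : X j c b = 1 - delta.
  rewrite rhoS_offdiag; last by rewrite -val_eqE /= def_b ltn_eqF.
  by rewrite def_b eqxx /= (set_nth_default j0) // eqxx.
have -> : delta_mx c b = (1 - delta)^-1 *: (delta_mx c c * X j * delta_mx b b).
  by rewrite delta_mx_sandwich X_cb scalerA mulVf ?scale1r // subr_eq0 eq_sym.
by apply/word_spanZ/span_mul/span_diag_unit/span_mul/span_rhoS; exact: span_diag_unit.
Qed.

Lemma span_upper_unit d (a b : 'I_k.+1) : b = (a + d)%N :> nat -> span (delta_mx a b).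
Proof.
elim: d b => [|d IH] b def_b.
  have -> : b = a by apply: val_inj; rewrite /= def_b addn0.
  exact: span_diag_unit.
have lt_ad : (a + d < k.+1)%N by apply: leq_ltn_trans (ltn_ord b); rewrite def_b addnS.
rewrite -(mul_delta_mx (Ordinal lt_ad)).
by apply: span_mul; [exact: IH | apply: span_superdiag_unit; rewrite def_b addnS].
Qed.

Lemma span_upper_tri M : upper_tri M -> span M.
Proof.
move=> upM; rewrite (matrix_sum_delta M).
apply: word_span_sum => a; apply: word_span_sum => b.
have [le_ab|lt_ba] := leqP a b.
  by apply/word_spanZ/(span_upper_unit (d := b - a)); rewrite subnKC.
by rewrite upM // scale0r; exact: word_span0.
Qed.

End Range.

Theorem lemma4p3 (C : numClosedFieldType) (n k : nat) (w : seq 'I_n)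
  (delta : C) :
  (2 <= n)%N -> size w = k -> (2 <= k)%N -> 0 <= delta -> delta < 1 ->
  [/\
   (* entries (1,k+1) for words of length <= k *)
   (forall Z : 'M[C]_(k.+1, n), (forall i, in_dball delta (row i Z)) ->
      rhoSw Z delta w w ord0 ord_max = (1 - delta) ^+ k /\
      (forall v : seq 'I_n, (size v <= k)%N -> v != w ->
         rhoSw Z delta w v ord0 ord_max = 0)),
   (* words of length > k : an (analytic, here polynomial) F_v with F_v(0)=0 *)
   (forall v : seq 'I_n, (k < size v)%N ->
      exists F : {mpoly C[k.+1 * n]},
        F.@[fun _ => 0] = 0 /\
        forall Z : 'M[C]_(k.+1, n), (forall i, in_dball delta (row i Z)) ->
          rhoSw Z delta w v ord0 ord_max = F.@[fun t => mxvec Z 0 t]) &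
   (* distinct coordinates : range is T_{k+1}, and rho is in N_{Z,k+1} *)
   (forall Z : 'M[C]_(k.+1, n), (forall i, in_dball delta (row i Z)) ->
      injective (fun ij : 'I_k.+1 * 'I_n => Z ij.1 ij.2) ->
      (forall M : 'M[C]_k.+1, in_range_rho Z delta w M <-> upper_tri M) /\
      (forall (i : 'I_k.+1) (v : seq 'I_n),
         rhoSw Z delta w v i i = zpow (row i Z) v))].
Proof.
move=> n_ge2 size_w _ _ delta_lt1; split.
- move=> Z _; split; first exact: rhoSw_corner_self.
  by move=> v; apply: rhoSw_corner_short.
- move=> v lt_kv; exists (corner_poly k delta w v); split; first exact: corner_poly0.
  by move=> Z _; rewrite corner_polyE.
- move=> Z _ Z_inj; split; last by move=> i v; apply: rhoSw_diag.
  move=> M; split=> [/in_word_spanE/word_span_rhoSw_upper //|upM].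
  by apply/in_word_spanE/span_upper_tri => //; rewrite lt_eqF.
Qed.
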